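(* Let $\mathbf{T}$ be a $\sigma$-structure, $\mathbf{A}$ an instance of $\mathrm{CSP}(\mathbf{T})$, $\mathbb{F}$ a field, $D\ge1$, and $R$ a degree-$D$ pseudo-reduction operator for $P_{\mathbf{A}\to\mathbf{T}}$. Then for every $k\le D$ the collection $\kappa_R=\{\kappa_R(X):X\subseteq A,|X|\le k\}$, where $\kappa_R(X)=\{\varphi\in\mathrm{Hom}(\mathbf{A}[X],\mathbf{T}):R(m_\varphi)\ne0\}$, is $k$-consistent with all $\kappa_R(X)$ nonempty. Moreover, if $\mathbb{F}$ has characteristic $0$ and $R$ is integral, then for every $\mathbb{Z}$-linear map $h:\mathbb{Z}[\mathbf{x}_{A,T}]\to\mathbb{Z}$ with $h(1)=1$, the assignment $x_{X,\varphi}:=h(R(m_\varphi))$ for all $X\subseteq A$ with $|X|\le D$ and $\varphi\in\mathrm{Hom}(\mathbf{A}[X],\mathbf{T})$ is an integer solution of $L_D(\mathbf{A},\mathbf{T},\kappa_R)$ (and, restricted to $|X|\le k$, of $L_k(\mathbf{A},\mathbf{T},\kappa_R)$ for all $k\le D$). Consequently, if a degree-$D$ integral pseudo-reduction operator for $P_{\mathbf{A}\to\mathbf{T}}$ exists, the $\mathbb{Z}$-affine $k$-consistency algorithm for $\mathrm{CSP}(\mathbf{T})$ accepts $\mathbf{A}$ for all $k\le D$.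
   Context: Relational structures: a signature $\sigma$ is a finite set of relation symbols with arities; a $\sigma$-structure $\mathbf{A}$ has a finite domain $A$ and relations $\Gamma^{\mathbf{A}}\subseteq A^{\mathrm{ar}(\Gamma)}$; a homomorphism maps tuples of $\Gamma^{\mathbf{A}}$ into $\Gamma^{\mathbf{T}}$. An instance of $\mathrm{CSP}(\mathbf{T})$ is a $\sigma$-structure no tuple of whose relations has repeated entries. For $X\subseteq A$, $\mathbf{A}[X]$ is the substructure on $X$ (tuples with all entries in $X$), and $\mathrm{Hom}(\mathbf{A}[X],\mathbf{T})$ its set of homomorphisms to $\mathbf{T}$. Polynomial encoding: $\mathbb{F}[\mathbf{x}_{A,T}]$ is the polynomial ring in variables $x_{a,i}$ ($a\in A,i\in T$). $P_{\mathbf{A}\to\mathbf{T}}$ consists of: $\sum_{i\in T}x_{a,i}-1$ for $a\in A$; $x_{a,i}x_{a,i'}$ for $a\in A$, $i\ne i'$; for each $\Gamma\in\sigma$, $(a_1,\dots,a_r)\in\Gamma^{\mathbf{A}}$ and $(c_1,\dots,c_r)\in T^r\setminus\Gamma^{\mathbf{T}}$, the monomial $\prod_jx_{a_j,c_j}$; and $x_{a,i}^2-x_{a,i}$. For a partial map $\varphi:A\to T$, $m_\varphi=\prod_{a\in\mathrm{dom}\varphi}x_{a,\varphi(a)}$ (so $m_\emptyset=1$). A degree-$D$ pseudo-reduction operator for a set $\mathcal{P}\subseteq\mathbb{F}[x_1,\dots,x_n]$ is an $\mathbb{F}$-linear map $R$ on $\mathbb{F}[x_1,\dots,x_n]$ with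 (1) $R(1)=1$, (2) $R(p)=0$ for all $p\in\mathcal{P}$, (3) $R(x_im)=R(x_iR(m))$ for every monomial $m$ of degree at most $D-1$ and every variable $x_i$. When $\mathbb{F}$ has characteristic $0$ (so $\mathbb{Z}\subseteq\mathbb{F}$), $R$ is integral if $R(m)\in\mathbb{Z}[x_1,\dots,x_n]$ for every monomial $m$. $k$-consistency: a collection $\kappa=\{\kappa(X):X\subseteq A,|X|\le k\}$ with $\kappa(X)\subseteq\mathrm{Hom}(\mathbf{A}[X],\mathbf{T})$ is $k$-consistent if for all $Y\subseteq X$, $|X|\le k$: every $\varphi\in\kappa(Y)$ is the restriction of some $\psi\in\kappa(X)$, and every $\psi\in\kappa(X)$ restricts to an element of $\kappa(Y)$. $L_k(\mathbf{A},\mathbf{T},\kappa)$ is the system in variables $x_{X,\varphi}$ ($|X|\le k$, $\varphi\in\mathrm{Hom}(\mathbf{A}[X],\mathbf{T})$): $\sum_{\varphi\in\kappa(X)}x_{X,\varphi}=1$ for each $|X|\le k$, and $\sum_{\varphi\in\kappa(X),\varphi|_Y=\psi}x_{X,\varphi}=x_{Y,\psi}$ for all $Y\subseteq X$, $|X|\le k$, $\psi\in\kappa(Y)$. The $\mathbb{Z}$-affine $k$-consistency algorithm for $\mathrm{CSP}(\mathbf{T})$ accepts $\mathbf{A}$ iff there is a $k$-consistent collection $\kappa$ with all $\kappa(X)$ nonempty such that $L_k(\mathbf{A},\mathbf{T},\kappa)$ has a solution over $\mathbb{Z}$. *)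

From HB Require Import structures.
From mathcomp Require Import all_boot all_order all_algebra.
From mathcomp Require Import mpoly.
Set Implicit Arguments. Unset Strict Implicit. Unset Printing Implicit Defensive.
Import Order.TTheory GRing.Theory Num.Theory.
Local Open Scope ring_scope.

Record signature := Signature { sym : finType; ar : sym -> nat }.

Record structure (s : signature) := Structure {
  dom : finType;
  rel : forall G : sym s, {set (ar G).-tuple dom} }.

Section Defs.
Variable s : signature.
Variables (A T : structure s).

Definition is_instance : Prop :=
  forall (G : sym s) (t : (ar G).-tuple (dom A)), t \in rel A G -> uniq t.

Definition nv : nat := #|{: (dom A * dom T)%type}|.

Definition poly_AT (F : fieldType) := {mpoly F[nv]}.

Definition xv (F : fieldType) (a : dom A) (i : dom T) : {mpoly F[nv]} :=
  'X_(enum_rank (a, i)).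

Definition in_P (F : fieldType) (p : {mpoly F[nv]}) : Prop :=
  (exists a : dom A, p = \sum_(i : dom T) xv F a i - 1)
  \/ (exists (a : dom A) (i i' : dom T), i != i' /\ p = xv F a i * xv F a i')
  \/ (exists (G : sym s) (t : (ar G).-tuple (dom A)) (c : (ar G).-tuple (dom T)),
        [/\ t \in rel A G, c \notin rel T G &
            p = \prod_(j < ar G) xv F (tnth t j) (tnth c j)])
  \/ (exists (a : dom A) (i : dom T), p = xv F a i ^+ 2 - xv F a i).

Definition pseudo_reduction (F : fieldType) (D : nat)
    (R : {mpoly F[nv]} -> {mpoly F[nv]}) : Prop :=
  [/\ forall (c : F) (p q : {mpoly F[nv]}), R (c *: p + q) = c *: R p + R q,
      R 1 = 1,
      forall p, in_P p -> R p = 0 &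
      forall (i : 'I_nv) (m : 'X_{1..nv}), (mdeg m <= D - 1)%N ->
        R ('X_i * 'X_[m]) = R ('X_i * R 'X_[m])].

Definition char0 (F : fieldType) : Prop := [pchar F] =i pred0.

Definition zmap (F : fieldType) (q : {mpoly int[nv]}) : {mpoly F[nv]} :=
  map_mpoly (fun z : int => z%:~R) q.

Definition integral (F : fieldType) (R : {mpoly F[nv]} -> {mpoly F[nv]}) : Prop :=
  forall m : 'X_{1..nv}, exists q : {mpoly int[nv]}, zmap F q = R 'X_[m].

(* partial maps A -> T, as finite functions into option T *)
Definition parmap := {ffun dom A -> option (dom T)}.

Definition pdom (phi : parmap) : {set dom A} := [set a | phi a != None].

Definition restr (phi : parmap) (Y : {set dom A}) : parmap :=
  [ffun a => if a \in Y then phi a else None].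

Definition mono (F : fieldType) (phi : parmap) : {mpoly F[nv]} :=
  \prod_(a : dom A) (if phi a is Some i then xv F a i else 1).

(* Hom(A[X], T): partial maps with domain X that are homomorphisms of the
   substructure A[X] (tuples with all entries in X) into T *)
Definition Hom (X : {set dom A}) : {set parmap} :=
  [set phi : parmap | (pdom phi == X) &&
     [forall G : sym s, forall t : (ar G).-tuple (dom A),
        ((t \in rel A G) && all (fun a => a \in X) t) ==>
        [exists u : (ar G).-tuple (dom T),
            (u \in rel T G) && (map phi t == map Some u)]]].

Definition k_consistent (k : nat) (kappa : {set dom A} -> {set parmap}) : Prop :=
  (forall X : {set dom A}, (#|X| <= k)%N -> kappa X \subset Hom X) /\
  (forall X Y : {set dom A}, (#|X| <= k)%N -> Y \subset X ->
     (forall phi, phi \in kappa Y -> exists2 psi, psi \in kappa X & restr psi Y = phi) /\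
     (forall psi, psi \in kappa X -> restr psi Y \in kappa Y)).

Definition L_solution (k : nat) (kappa : {set dom A} -> {set parmap})
    (x : {set dom A} -> parmap -> int) : Prop :=
  (forall X : {set dom A}, (#|X| <= k)%N -> \sum_(phi in kappa X) x X phi = 1) /\
  (forall X Y : {set dom A}, (#|X| <= k)%N -> Y \subset X ->
     forall psi, psi \in kappa Y ->
       \sum_(phi in kappa X | restr phi Y == psi) x X phi = x Y psi).

Definition Zaffine_accepts (k : nat) : Prop :=
  exists kappa : {set dom A} -> {set parmap},
    [/\ k_consistent k kappa,
        forall X : {set dom A}, (#|X| <= k)%N -> kappa X != set0 &
        exists x : {set dom A} -> parmap -> int, L_solution k kappa x].

Definition kappaR (F : fieldType) (R : {mpoly F[nv]} -> {mpoly F[nv]})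
    (X : {set dom A}) : {set parmap} :=
  [set phi in Hom X | R (mono F phi) != 0].

End Defs.

From Pilot Require Import Defs.
From HB Require Import structures.
From mathcomp Require Import all_boot all_order all_algebra.
From mathcomp Require Import mpoly.
From mathcomp Require Import zify ring.
Set Implicit Arguments. Unset Strict Implicit. Unset Printing Implicit Defensive.
Import GRing.Theory.
Local Open Scope ring_scope.

(* A degree-D pseudo-reduction operator R annihilates q * r whenever R r = 0 and
   deg q + deg r <= D: peel the variables of each monomial of q off one at a time
   using R (x_i m) = R (x_i R m).  Hence R (m_phi) = 0 when |dom phi| <= D and R
   kills the monomial of a restriction of phi, for instance the restriction to a
   tuple on which phi violates a constraint of T.  Summing m_phi over all
   extensions phi of psi to X gives m_psi times prod_{a in X \ Y} sum_i x_{a,i},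
   which R reduces to R (m_psi) since each sum_i x_{a,i} - 1 lies in P; the
   extensions outside kappa_R(X) contribute 0.  So the values R (m_phi) satisfy
   the equations of L_D over F with R (m_empty) = 1, which gives consistency and
   non-emptiness; in characteristic 0 an integral R lifts these identities to
   Z[x], where any Z-linear h with h 1 = 1 preserves them. *)

Section DegreeBounds.
Variables (n : nat) (R : idomainType).
Implicit Types p q : {mpoly R[n]}.

Lemma msizeM_le_pred p q : (msize (p * q) <= (msize p + msize q).-1)%N.
Proof.
have [->|nz_p] := eqVneq p 0; first by rewrite mul0r msize0.
have [->|nz_q] := eqVneq q 0; first by rewrite mulr0 msize0.
by rewrite msizeM.
Qed.

Lemma msize_prod_le (I : Type) (r : seq I) (P : pred I) (G : I -> {mpoly R[n]}) :
  (msize (\prod_(i <- r | P i) G i) <= (\sum_(i <- r | P i) (msize (G i)).-1).+1)%N.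
Proof.
elim: r => [|x r IH]; first by rewrite !big_nil msize1.
rewrite !big_cons; case: (P x) => //.
by rewrite (leq_trans (msizeM_le_pred _ _)) //; lia.
Qed.

Lemma mdegS_split (m : 'X_{1..n}) d : mdeg m = d.+1 ->
  exists i, exists2 m', m = (U_(i) + m')%MM & mdeg m' = d.
Proof.
move=> m_deg; have [i m_i] : exists i, m i != 0%N.
  apply/existsP; apply: contraTT isT => /existsPn m0.
  suff : mdeg m = 0%N by rewrite m_deg.
  by rewrite mdegE big1 // => i _; apply/eqP; rewrite -[_ == _]negbK m0.
have Ui_le : (U_(i) <= m)%MM by rewrite lep1mP.
exists i, (m - U_(i))%MM; first by rewrite addmC submK.
by move: m_deg; rewrite -{1}(submK Ui_le) mdegD mdeg1 addn1 => -[].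
Qed.

End DegreeBounds.

Lemma intr_inj_char0 (R : idomainType) : [pchar R] =i pred0 -> injective (intr : int -> R).
Proof.
move=> /pcharf0P charR0.
suff intr_eq0 (z : int) : z%:~R = 0 :> R -> z = 0.
  by move=> x y xy; apply/eqP; rewrite -subr_eq0; apply/eqP/intr_eq0; rewrite intrB xy subrr.
case: z => k; rewrite ?NegzE ?mulrNz ?(inj_eq oppr_inj) -pmulrn => /eqP.
  by rewrite charR0 => /eqP ->.
by rewrite oppr_eq0 charR0.
Qed.

Section IntegerLift.
Variables (s : signature) (A T : structure s) (F : fieldType).

Lemma zmap_inj : char0 F -> injective (zmap (A := A) (T := T) F).
Proof.
move=> F0 p q /mpolyP pq; apply/mpolyP => m; apply: (intr_inj_char0 F0).
by rewrite -!mcoeff_map_mpoly.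
Qed.

Lemma zmap1 : zmap (A := A) (T := T) F 1 = 1.
Proof. exact: rmorph1. Qed.

Lemma zmap_sum (I : Type) (r : seq I) (P : pred I) (G : I -> {mpoly int[nv A T]}) :
  zmap F (\sum_(i <- r | P i) G i) = \sum_(i <- r | P i) zmap F (G i).
Proof. exact: raddf_sum. Qed.

End IntegerLift.

Section PseudoReduction.
Variables (n : nat) (F : fieldType) (D : nat) (R : {mpoly F[n]} -> {mpoly F[n]}).
Hypothesis R_linear : forall c p q, R (c *: p + q) = c *: R p + R q.
Hypothesis R_mulX : forall i m, (mdeg m <= D - 1)%N -> R ('X_i * 'X_[m]) = R ('X_i * R 'X_[m]).

HB.instance Definition _ := GRing.isLinear.Build F {mpoly F[n]} {mpoly F[n]} _ R R_linear.

Lemma red_mulX i r : (msize r <= D)%N -> R ('X_i * r) = R ('X_i * R r).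
Proof.
move=> r_le; rewrite [in LHS](mpolyE r) [in RHS](mpolyE r) linear_sum !big_distrr /=.
rewrite !linear_sum; apply: eq_big_seq => m m_supp /=.
by rewrite linearZ -!scalerAr !linearZ /= R_mulX //; have := msize_mdeg_lt m_supp; lia.
Qed.

Lemma red_mulXm_eq0 m r : R r = 0 -> (mdeg m + msize r <= D.+1)%N -> R ('X_[m] * r) = 0.
Proof.
move=> r0; have := erefl (mdeg m); move: {2}(mdeg m) => d.
elim: d m => [|d IH] m m_deg D_le.
  by move/eqP: m_deg; rewrite mdeg_eq0 => /eqP ->; rewrite mpolyX0 mul1r.
rewrite m_deg in D_le; have [i [m' -> m'_deg]] := mdegS_split m_deg.
rewrite mpolyXD -mulrA red_mulX; first by rewrite IH ?mulr0 ?linear0 //; lia.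
by rewrite (leq_trans (msizeM_le_pred _ _)) // msizeX addSn /= m'_deg -ltnS -addSn.
Qed.

(* [msize p] is 1 + the total degree of p, so the bound reads deg q + deg r <= D. *)
Lemma red_mul_eq0 q r : R r = 0 -> (msize q + msize r <= D.+2)%N -> R (q * r) = 0.
Proof.
move=> r0 D_le; rewrite (mpolyE q) big_distrl linear_sum big1_seq //= => m m_supp.
rewrite -scalerAl linearZ /= red_mulXm_eq0 ?scaler0 //.
by have := msize_mdeg_lt m_supp; lia.
Qed.

End PseudoReduction.

Section PartialMaps.
Variables (s : signature) (A T : structure s).
Local Notation parmap := (parmap A T).
Local Notation Hom := (Defs.Hom T).
Implicit Types (phi psi : parmap) (X Y S : {set dom A}).

Definition pmap0 : parmap := [ffun=> None].

Lemma pdom_restr phi S : pdom (restr phi S) = pdom phi :&: S.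
Proof. by apply/setP => a; rewrite !inE ffunE; case: (a \in S); rewrite ?andbT ?andbF. Qed.

Lemma restr_set0 phi : restr phi set0 = pmap0.
Proof. by apply/ffunP => a; rewrite !ffunE inE. Qed.

Lemma pdom_pmap0 : pdom pmap0 = set0.
Proof. by apply/setP => a; rewrite !inE ffunE. Qed.

Lemma pdom_Hom phi X : phi \in Hom X -> pdom phi = X.
Proof. by rewrite inE => /andP [/eqP]. Qed.

Lemma Hom_restr phi X Y : phi \in Hom X -> Y \subset X -> restr phi Y \in Hom Y.
Proof.
rewrite !inE => /andP [/eqP phi_dom /forallP phi_hom] YX.
rewrite pdom_restr phi_dom (setIidPr YX) eqxx /=; apply/forallP => G; apply/forallP => t.
apply/implyP => /andP [tA t_Y].
have /forallP /(_ t) /implyP := phi_hom G; rewrite tA (sub_all _ t_Y); last first.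
  by move=> a /(subsetP YX).
move=> /(_ isT) /existsP [u /andP [uT /eqP phi_t]]; apply/existsP; exists u.
by rewrite uT -phi_t; apply/eqP/eq_in_map => a a_t; rewrite ffunE (allP t_Y a a_t).
Qed.

Lemma map_parmap_tuple k (t : k.-tuple (dom A)) phi :
  all (fun a => a \in pdom phi) t ->
  exists c : k.-tuple (dom T), map phi t = map Some c.
Proof.
move=> t_dom.
have /fin_all_exists [f phi_t] : forall j : 'I_k, exists v, phi (tnth t j) = Some v.
  move=> j; have := allP t_dom _ (mem_tnth j t).
  by rewrite inE; case: (phi _) => [v _|//]; exists v.
exists [tuple f j | j < k].
rewrite -[in LHS](map_tnth_enum t) -[in RHS](map_tnth_enum [tuple f j | j < k]) -!map_comp.
by apply: eq_map => j /=; rewrite tnth_mktuple phi_t.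
Qed.

End PartialMaps.

Arguments pmap0 {s A T}.

Section Monomials.
Variables (s : signature) (A T : structure s) (F : fieldType).
Local Notation parmap := (parmap A T).
Local Notation mono := (mono F).
Implicit Types (phi psi : parmap) (X Y S : {set dom A}).

Definition xopt (a : dom A) (o : option (dom T)) : {mpoly F[nv A T]} :=
  if o is Some v then xv F a v else 1.

Definition xsum (a : dom A) : {mpoly F[nv A T]} := \sum_(v : dom T) xv F a v.

Lemma monoE phi : mono phi = \prod_a xopt a (phi a).
Proof. by []. Qed.

Lemma mono_pmap0 : mono (pmap0 : parmap) = 1.
Proof. by rewrite monoE big1 // => a _; rewrite ffunE. Qed.

Lemma mono_restrC phi S : mono phi = mono (restr phi S) * mono (restr phi (~: S)).
Proof.
rewrite !monoE -big_split /=; apply: eq_bigr => a _; rewrite !ffunE inE.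
by case: (a \in S); rewrite ?mulr1 ?mul1r.
Qed.

Lemma msize_mono phi : (msize (mono phi) <= #|pdom phi|.+1)%N.
Proof.
rewrite monoE (leq_trans (msize_prod_le _ _ _)) // ltnS -sum1_card.
rewrite [X in (_ <= X)%N]big_mkcond /=; apply: leq_sum => a _; rewrite inE /xopt.
by case: (phi a) => [v|] /=; rewrite ?msize1 // /xv msizeX mdeg1.
Qed.

Lemma mono_monomial phi : exists m, mono phi = 'X_[m].
Proof.
rewrite monoE; apply: (big_ind (fun p => exists m, p = 'X_[m])).
- by exists 0%MM; rewrite mpolyX0.
- by move=> _ _ [m1 ->] [m2 ->]; exists (m1 + m2)%MM; rewrite mpolyXD.
- move=> a _; rewrite /xopt; case: (phi a) => [v|]; first by exists U_(enum_rank (a, v))%MM.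
  by exists 0%MM; rewrite mpolyX0.
Qed.

Lemma msize_xsum a : (msize (xsum a) <= 2)%N.
Proof.
rewrite (leq_trans (msize_sum _ _ _)) //; apply/bigmax_leqP => v _.
by rewrite /xv msizeX mdeg1.
Qed.

Lemma mono_restr_tuple k (t : k.-tuple (dom A)) (c : k.-tuple (dom T)) phi :
  uniq t -> map phi t = map Some c ->
  mono (restr phi [set a | a \in t]) = \prod_(j < k) xv F (tnth t j) (tnth c j).
Proof.
move=> t_uniq phi_t.
have phi_tnth j : phi (tnth t j) = Some (tnth c j).
  by rewrite -(tnth_map phi) -(tnth_map Some); congr (tnth _ j); apply: val_inj.
transitivity (\prod_(a in t) xopt a (phi a)).
  by rewrite [RHS]big_mkcond; apply: eq_bigr => a _; rewrite ffunE inE; case: (_ \in _).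
rewrite -(big_uniq _ t_uniq) big_tuple; apply: eq_bigr => j _.
by rewrite phi_tnth.
Qed.

Lemma sum_mono_extensions X Y psi : Y \subset X -> pdom psi = Y ->
  \sum_(phi | (pdom phi == X) && (restr phi Y == psi)) mono phi =
  mono psi * \prod_(a in X :\: Y) xsum a.
Proof.
move=> YX psi_dom; have psiE a : (a \in Y) = (psi a != None) by rewrite -psi_dom inE.
(* The extensions are the functions choosing a value in Q a at every a, so the
   sum factors as a product of sums over the Q a. *)
pose Q a := [pred o | if a \in Y then o == psi a else if a \in X then o != None else o == None].
have extE phi : (pdom phi == X) && (restr phi Y == psi) = (phi \in family Q).
  apply/andP/familyP => [[/eqP phi_dom /eqP phi_Y] a | Qphi].
    by rewrite inE -phi_dom -phi_Y ffunE inE; case: (a \in Y); case: (phi a) => *; rewrite ?eqxx.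
  split; apply/eqP.
    apply/setP => a; have := Qphi a; rewrite !inE.
    case: ifP => [aY /eqP -> | _]; first by rewrite -psiE aY (subsetP YX).
    by case: ifP => // _ /eqP ->.
  apply/ffunP => a; have := Qphi a; rewrite ffunE inE.
  case: ifP => [_ /eqP // | aY _]; apply/esym/eqP; by rewrite -[_ == _]negbK -psiE aY.
have factorE a : \sum_(o | Q a o) xopt a o =
    if a \in Y then xopt a (psi a) else if a \in X then xsum a else 1.
  rewrite /Q; case: ifP => _; first by rewrite big_pred1_eq.
  case: ifP => _; last by rewrite big_pred1_eq.
  rewrite (reindex_omap Some id) /=; last by case.
  by apply: eq_bigl => v; rewrite eqxx.
rewrite (eq_bigl _ _ extE) -(bigA_distr_big_dep Q xopt) (eq_bigr _ (fun a _ => factorE a)).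
rewrite (bigID (mem Y)) monoE (bigID (mem Y) _ (fun a => xopt a (psi a))) /=.
rewrite [X in _ = _ * X * _]big1 => [|a aY]; last by move: aY; rewrite psiE negbK => /eqP ->.
rewrite mulr1; congr (_ * _); first by apply: eq_bigr => a ->.
by rewrite big_mkcond [RHS]big_mkcond; apply: eq_bigr => a _; rewrite inE; case: (a \in Y).
Qed.

End Monomials.

Section KappaR.
Variables (s : signature) (A T : structure s) (F : fieldType) (D : nat).
Variable R : {mpoly F[nv A T]} -> {mpoly F[nv A T]}.
Hypothesis R_pseudo : pseudo_reduction D R.
Hypothesis A_instance : is_instance A.
Local Notation parmap := (parmap A T).
Local Notation mono := (mono F).
Local Notation Hom := (Defs.Hom T).
Local Notation kappa := (kappaR R).
Local Notation xsum := (xsum T F).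
Implicit Types (phi psi : parmap) (X Y S : {set dom A}).

Let R_linear : forall c p q, R (c *: p + q) = c *: R p + R q.
Proof. by case: R_pseudo. Qed.

Let R_mulX i m : (mdeg m <= D - 1)%N -> R ('X_i * 'X_[m]) = R ('X_i * R 'X_[m]).
Proof. by case: R_pseudo => _ _ _; apply. Qed.

HB.instance Definition _ := GRing.isLinear.Build F _ _ _ R R_linear.

Lemma red1 : R 1 = 1.
Proof. by case: R_pseudo. Qed.

Lemma red_P p : in_P p -> R p = 0.
Proof. by case: R_pseudo => _ _ R_P _; apply: R_P. Qed.

Lemma red_mono_restr_eq0 phi S : (#|pdom phi| <= D)%N ->
  R (mono (restr phi S)) = 0 -> R (mono phi) = 0.
Proof.
move=> phi_le R0; rewrite (mono_restrC F phi S) mulrC (red_mul_eq0 R_linear R_mulX) //.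
have := msize_mono F (restr phi S); have := msize_mono F (restr phi (~: S)).
rewrite !pdom_restr -setDE; have := cardsID S (pdom phi); lia.
Qed.

Lemma red_mono_notHom phi : (#|pdom phi| <= D)%N -> phi \notin Hom (pdom phi) ->
  R (mono phi) = 0.
Proof.
move=> phi_le; rewrite inE eqxx /= => /forallPn [G] /forallPn [t].
rewrite negb_imply => /andP [/andP [tA t_dom] /existsPn not_hom].
have [c phi_t] := map_parmap_tuple t_dom.
apply: (red_mono_restr_eq0 (S := [set a | a \in t])) phi_le _.
rewrite (mono_restr_tuple F (A_instance tA) phi_t); apply: red_P; right; right; left.
by exists G, t, c; split=> //; move: (not_hom c); rewrite phi_t eqxx andbT.
Qed.

Lemma red_mul_prod_xsum (r : seq (dom A)) p : (msize p + size r <= D.+1)%N ->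
  R (p * \prod_(a <- r) xsum a) = R p.
Proof.
elim: r p => [|a r IH] p D_le; first by rewrite big_nil mulr1.
have xsum1_le : (msize (xsum a - 1) <= 2)%N.
  by rewrite (leq_trans (msizeD_le _ _)) // msizeN msize1 geq_max msize_xsum.
have pxsum_le : (msize (p * xsum a) <= (msize p).+1)%N.
  by rewrite (leq_trans (msizeM_le_pred _ _)) // -subn1 leq_subLR add1n -addn2 leq_add2l msize_xsum.
rewrite big_cons mulrA IH; last by move: D_le => /=; lia.
have -> : p * xsum a = p + p * (xsum a - 1) by ring.
rewrite linearD /= (red_mul_eq0 R_linear R_mulX) ?addr0 //; last by move: D_le => /=; lia.
by apply: red_P; left; exists a.
Qed.

Lemma sum_red_extensions X Y psi : Y \subset X -> (#|X| <= D)%N -> pdom psi = Y ->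
  \sum_(phi in kappa X | restr phi Y == psi) R (mono phi) = R (mono psi).
Proof.
move=> YX X_le psi_dom.
transitivity (\sum_(phi | (pdom phi == X) && (restr phi Y == psi)) R (mono phi)).
  rewrite big_mkcond [RHS]big_mkcond; apply: eq_bigr => phi _; rewrite inE.
  have [phi_Hom|phi_notHom] := boolP (phi \in Hom X).
    move: (phi_Hom); rewrite inE => /andP [-> _] /=.
    by case: (restr phi Y == psi); case: (R (mono phi) =P 0) => [->|].
  case: (pdom phi =P X) => //= phi_dom.
  by rewrite red_mono_notHom ?phi_dom ?if_same.
rewrite -linear_sum /= sum_mono_extensions // -big_enum red_mul_prod_xsum // -cardE.
have := msize_mono F psi; have := cardsID Y X; rewrite (setIidPr YX) psi_dom; lia.
Qed.

Lemma sum_red_kappa X : (#|X| <= D)%N -> \sum_(phi in kappa X) R (mono phi) = 1.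
Proof.
move=> X_le; rewrite -red1 -(mono_pmap0 A T F).
rewrite -(sum_red_extensions (sub0set X) X_le (pdom_pmap0 A T)).
by apply: eq_bigl => phi; rewrite restr_set0 eqxx andbT.
Qed.

Lemma kappaR_extend X Y psi : Y \subset X -> (#|X| <= D)%N -> pdom psi = Y ->
  R (mono psi) != 0 -> exists2 phi, phi \in kappa X & restr phi Y = psi.
Proof.
move=> YX X_le psi_dom; rewrite -(sum_red_extensions YX X_le psi_dom) => sum_neq0.
have /existsP [phi /andP [phi_X /eqP phi_Y]] :
    [exists phi, (phi \in kappa X) && (restr phi Y == psi)].
  apply: contraNT sum_neq0 => /existsPn no_ext.
  by rewrite big_pred0 // => phi; apply/negbTE/no_ext.
by exists phi.
Qed.

Lemma kappaR_consistent k : (k <= D)%N ->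
  k_consistent k kappa /\ (forall X, (#|X| <= k)%N -> kappa X != set0).
Proof.
move=> k_le; have le_D X : (#|X| <= k)%N -> (#|X| <= D)%N by move/leq_trans; apply.
split; first split.
- by move=> X _; apply/subsetP => phi; rewrite inE => /andP [].
- move=> X Y /le_D X_le YX; split.
    move=> psi; rewrite inE => /andP [/pdom_Hom psi_dom R_psi].
    exact: kappaR_extend YX X_le psi_dom R_psi.
  move=> phi; rewrite [phi \in _]inE => /andP [phi_Hom R_phi].
  rewrite inE (Hom_restr phi_Hom YX); apply: contra R_phi => /eqP R_restr.
  by rewrite (red_mono_restr_eq0 (S := Y)) ?(pdom_Hom phi_Hom).
- move=> X /le_D X_le.
  have [|phi phi_X _] := kappaR_extend (sub0set X) X_le (pdom_pmap0 A T).
    by rewrite mono_pmap0 red1 oner_neq0.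
  by apply/set0Pn; exists phi.
Qed.

Lemma kappaR_L_solution (Rz : parmap -> {mpoly int[nv A T]}) (h : {mpoly int[nv A T]} -> int) :
  char0 F -> (forall phi, zmap F (Rz phi) = R (mono phi)) ->
  {morph h : p q / p + q} -> h 1 = 1 ->
  L_solution D kappa (fun _ phi => h (Rz phi)).
Proof.
move=> F0 Rz_lift hD h1.
have h0 : h 0 = 0 by apply/(addrI (h 0)); rewrite -hD !addr0.
have h_sum := big_morph h hD h0.
split=> [X X_le | X Y X_le YX psi].
  rewrite -h1 -h_sum; congr h; apply: (zmap_inj F0).
  by rewrite zmap_sum zmap1 (eq_bigr _ (fun phi _ => Rz_lift phi)) sum_red_kappa.
rewrite inE => /andP [/pdom_Hom psi_dom _]; rewrite -h_sum; congr h; apply: (zmap_inj F0).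
by rewrite zmap_sum Rz_lift (eq_bigr _ (fun phi _ => Rz_lift phi)) sum_red_extensions.
Qed.

End KappaR.

Lemma L_solution_le (s : signature) (A T : structure s) k D
    (kappa : {set dom A} -> {set parmap A T}) x :
  (k <= D)%N -> L_solution D kappa x -> L_solution k kappa x.
Proof.
move=> k_le [sum1 sum_ext]; split=> [X X_le | X Y X_le]; first exact/sum1/(leq_trans X_le).
exact/sum_ext/(leq_trans X_le).
Qed.

Lemma integral_lift (s : signature) (A T : structure s) (F : fieldType)
    (R : {mpoly F[nv A T]} -> {mpoly F[nv A T]}) :
  integral R -> exists Rz : parmap A T -> {mpoly int[nv A T]},
    forall phi, zmap F (Rz phi) = R (mono F phi).
Proof.
move=> R_int; suff /fin_all_exists : forall phi : parmap A T,
    exists q : {mpoly int[nv A T]}, zmap F q = R (mono F phi) by [].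
by move=> phi; have [m ->] := mono_monomial F phi; apply: R_int.
Qed.

Theorem mainTheorem4 (s : signature) (T A : structure s) (F : fieldType)
    (D : nat) (R : {mpoly F[nv A T]} -> {mpoly F[nv A T]}) :
  is_instance A -> (1 <= D)%N -> @pseudo_reduction s A T F D R ->
  [/\ (forall k : nat, (k <= D)%N ->
         k_consistent k (kappaR R) /\
         (forall X : {set dom A}, (#|X| <= k)%N -> kappaR R X != set0)),
      (char0 F -> @integral s A T F R ->
       forall (Rz : parmap A T -> {mpoly int[nv A T]}),
         (forall phi : parmap A T, zmap F (Rz phi) = R (mono F phi)) ->
       forall h : {mpoly int[nv A T]} -> int,
         (forall p q, h (p + q) = h p + h q) ->
         (forall (c : int) p, h (c *: p) = c * h p) ->
         h 1 = 1 ->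
         L_solution D (kappaR R) (fun X phi => h (Rz phi)) /\
         (forall k : nat, (k <= D)%N ->
            L_solution k (kappaR R) (fun X phi => h (Rz phi)))) &
      (char0 F ->
       (exists R' : {mpoly F[nv A T]} -> {mpoly F[nv A T]},
          @pseudo_reduction s A T F D R' /\ @integral s A T F R') ->
       forall k : nat, (k <= D)%N -> Zaffine_accepts A T k)].
Proof.
move=> A_inst _ R_pseudo; split.
- by move=> k; apply: kappaR_consistent.
- move=> F0 _ Rz Rz_lift h hD _ h1.
  have sol := kappaR_L_solution R_pseudo A_inst F0 Rz_lift hD h1.
  by split=> // k k_le; apply: L_solution_le k_le sol.
- move=> F0 [R' [R'_pseudo R'_int]] k k_le.
  have [Rz Rz_lift] := integral_lift R'_int.
  have [kappa_cons kappa_neq0] := kappaR_consistent R'_pseudo A_inst k_le.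
  exists (kappaR R'); split=> //; exists (fun _ phi => (Rz phi)@_0).
  apply: L_solution_le k_le (kappaR_L_solution R'_pseudo A_inst F0 Rz_lift _ _).
    by move=> p q; rewrite mcoeffD.
  by rewrite mcoeff1 eqxx.
Qed.
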